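(* Let $K$ be a positive integer, and let each of $N$ and $J$ be either a positive integer or $\infty$; write $[N]=\{1,\dots,N\}$ (with $[N]=\mathbb{Z}_+$ if $N=\infty$), and similarly for $[J]$. Let $\Theta=[\Theta_1,\dots,\Theta_K]$ with $\Theta_k:[N]\to\mathbb{R}$, let $A=[A_1,\dots,A_K]$ with $A_k:[J]\to\mathbb{R}$, let $Q=[Q_1,\dots,Q_K]$ with $Q_k:[J]\to\{0,1\}$, and let $M=\Theta A^T$, i.e. $M(i,j)=\sum_{k=1}^K\Theta_k(i)A_k(j)$. Suppose $(\Theta,A)$ satisfies the Model Assumptions (1)–(4) relative to $Q$ (see context), and suppose $\operatorname{supp}(Q_k)$ is non-empty for every $k$. Then for each $k\in\{1,\dots,K\}$, the factor loading $A_k$ is identifiable if and only if no $k'\neq k$ masks $k$.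
   Context: For $S\subset\{1,\dots,K\}$, $\mathcal{R}(S)\subset[J]$ is the set of indices $j$ such that $Q_k(j)=1$ for all $k\in S$ and $Q_k(j)=0$ for all $k\notin S$. For $\mathcal{R}\subset[J]$ and $S\subset\{1,\dots,K\}$, $A_{[\mathcal{R},S]}$ is the submatrix of $A$ with rows in $\mathcal{R}$ and columns in $S$. $\operatorname{supp}(Q_k)=\{j: Q_k(j)=1\}$. We say $k'$ masks $k$ if $\operatorname{supp}(Q_{k'})\subset\operatorname{supp}(Q_k)$. Model Assumptions for a pair $(\Theta,A)$ relative to $Q$: (1) the columns $\Theta_1,\dots,\Theta_K$ are linearly independent; (2) for every $S\subset\{1,\dots,K\}$ with $\mathcal{R}(S)$ non-empty, the columns of $A_{[\mathcal{R}(S),S]}$ are linearly independent; (3) for every $k$, $A_k(j)=0$ whenever $Q_k(j)=0$; (4) there is a constant $C>0$ with $\sup_{k,i}|\Theta_k(i)|<C$ and $\sup_{k,j}|A_k(j)|<C$. $A_k$ is identifiable if for every decomposition $M=\widetilde\Theta\widetilde A^T$ (with $\widetilde\Theta=[\widetilde\Theta_1,\dots,\widetilde\Theta_K]$, $\widetilde\Theta_k:[N]\to\mathbb{R}$, $\widetilde A=[\widetilde A_1,\dots,\widetilde A_K]$, $\widetilde A_k:[J]\to\mathbb{R}$) such that $(\widetilde\Theta,\widetilde A)$ satisfies Model Assumptions (1)–(4) relative to the same $Q$, the vectors $A_k$ and $\widetilde A_k$ are linearly dependent. *)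

From mathcomp Require Import all_boot all_order all_algebra.
From mathcomp Require Import reals.
Set Implicit Arguments. Unset Strict Implicit. Unset Printing Implicit Defensive.
Import Order.TTheory GRing.Theory Num.Theory.
Local Open Scope ring_scope.

(* A size parameter that is a positive integer or infinity:
   [Some n] with 0 < n means n, [None] means infinity. *)
Definition pos_or_inf (N : option nat) : Prop :=
  match N with Some n => (0 < n)%N | None => True end.

Definition inIdx (N : option nat) (i : nat) : bool :=
  match N with Some n => (0 < i <= n)%N | None => (0 < i)%N end.

Definition Idx (N : option nat) : Type := {i : nat | inIdx N i}.

Section Model.
Variables (R : realType) (K : nat) (N J : option nat).

Definition RS (Q : 'I_K -> Idx J -> bool) (S : {set 'I_K}) (j : Idx J) : Prop :=
  forall k : 'I_K, Q k j = (k \in S).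

Definition supp (Q : 'I_K -> Idx J -> bool) (k : 'I_K) (j : Idx J) : Prop :=
  Q k j = true.

Definition masks (Q : 'I_K -> Idx J -> bool) (k' k : 'I_K) : Prop :=
  forall j : Idx J, supp Q k' j -> supp Q k j.

Definition model_assumptions (Q : 'I_K -> Idx J -> bool)
    (Th : 'I_K -> Idx N -> R) (A : 'I_K -> Idx J -> R) : Prop :=
  (forall c : 'I_K -> R,
      (forall i : Idx N, \sum_(k < K) c k * Th k i = 0) -> forall k, c k = 0) /\
  (forall S : {set 'I_K}, (exists j, RS Q S j) ->
     forall c : 'I_K -> R,
       (forall j : Idx J, RS Q S j -> \sum_(k in S) c k * A k j = 0) ->
       forall k, k \in S -> c k = 0) /\
  (forall (k : 'I_K) (j : Idx J), Q k j = false -> A k j = 0) /\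
  (exists C : R, 0 < C /\
     (forall k i, `|Th k i| < C) /\ (forall k j, `|A k j| < C)).

Definition Mmat (Th : 'I_K -> Idx N -> R) (A : 'I_K -> Idx J -> R)
    (i : Idx N) (j : Idx J) : R := \sum_(k < K) Th k i * A k j.

Definition lin_dep (u v : Idx J -> R) : Prop :=
  exists a b : R, (a != 0 \/ b != 0) /\ forall j, a * u j + b * v j = 0.

Definition identifiable (Q : 'I_K -> Idx J -> bool)
    (Th : 'I_K -> Idx N -> R) (A : 'I_K -> Idx J -> R) (k : 'I_K) : Prop :=
  forall (Th' : 'I_K -> Idx N -> R) (A' : 'I_K -> Idx J -> R),
    (forall i j, Mmat Th A i j = Mmat Th' A' i j) ->
    model_assumptions Q Th' A' ->
    lin_dep (A k) (A' k).
End Model.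

(* Since the columns of Theta are linearly independent,
   finitely many rows of Theta already separate them, so the corresponding
   rows of M = Theta' A'^T express A_k as a combination sum_l g_l A'_l.  If
   m <> k does not mask k, pick j with Q_m(j) = 1 and Q_k(j) = 0 and let
   S = {l | Q_l(j) = 1}: on the region R(S) both A_k and every A'_l with l
   outside S vanish, so assumption (2) for A' forces g_m = 0, and A_k is a
   multiple of A'_k.  If k' masks k, replace A_k by A_k + A_k' and
   Theta_k' by Theta_k' - Theta_k.  This leaves M unchanged and, because
   supp(Q_k') is inside supp(Q_k), preserves the model assumptions; but A_k and
   A_k + A_k' are independent, as A_k and A_k' are on a region where both are
   active. *)

From Stdlib Require Import Classical.
From mathcomp Require Import all_boot all_order all_algebra.
From mathcomp Require Import zify.
From mathcomp Require Import reals ring lra.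
Set Implicit Arguments. Unset Strict Implicit. Unset Printing Implicit Defensive.
Import Order.TTheory GRing.Theory Num.Theory.
Local Open Scope ring_scope.

Definition free_family (F : pzRingType) (K : nat) (T : Type) (f : 'I_K -> T -> F) :=
  forall c : 'I_K -> F, (forall t, \sum_(k < K) c k * f k t = 0) -> forall k, c k = 0.

Section SampledRows.
Variables (F : fieldType) (K : nat) (T : Type) (f : 'I_K -> T -> F).
Hypothesis f_free : free_family f.

Definition value_row (t : T) : 'rV[F]_K := \row_l f l t.

Definition sample_mx n (s : 'I_n -> T) : 'M[F]_(n, K) := \matrix_a value_row (s a).

Lemma row_full_sample_mx n (s : 'I_n -> T) :
  (forall t, (value_row t <= sample_mx s)%MS) -> row_full (sample_mx s).
Proof.
move=> rows_sub; rewrite -cokermx_eq0; apply/eqP/matrixP => l j.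
rewrite [RHS]mxE; move: l.
apply: (f_free (c := fun l => cokermx (sample_mx s) l j)) => t.
have := rows_sub t; rewrite submxE => /eqP/matrixP/(_ 0 j).
rewrite [LHS]mxE [RHS]mxE => row_C; apply: etrans row_C.
by apply: eq_bigr => l _; rewrite [value_row _ _ _]mxE mulrC.
Qed.

Lemma sample_mx_extend n (s : 'I_n -> T) t :
  ~~ (value_row t <= sample_mx s)%MS ->
  exists s' : 'I_n.+1 -> T, (\rank (sample_mx s) < \rank (sample_mx s'))%N.
Proof.
move=> t_notin.
pose s' a := if unlift ord_max a is Some b then s b else t.
exists s'.
have t_in : (value_row t <= sample_mx s')%MS.
  have -> : value_row t = row ord_max (sample_mx s') by rewrite rowK /s' unlift_none.
  exact: row_sub.
have sub : (sample_mx s <= sample_mx s')%MS.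
  apply/row_subP => a.
  have -> : row a (sample_mx s) = row (lift ord_max a) (sample_mx s').
    by rewrite !rowK /s' liftK.
  exact: row_sub.
rewrite (ltn_leqif (mxrank_leqif_sup sub)).
by apply: contra t_notin; apply: submx_trans.
Qed.

Lemma exists_row_full_sample : exists n (s : 'I_n -> T), row_full (sample_mx s).
Proof.
suff: forall d n (s : 'I_n -> T), (K - \rank (sample_mx s) <= d)%N ->
    exists n (s : 'I_n -> T), row_full (sample_mx s).
  have s0 : 'I_0 -> T by case=> ?; rewrite ltn0.
  by move/(_ K 0%N s0); apply; rewrite leq_subr.
elim=> [|d IH] n s deficiency.
  by exists n, s; apply/eqP; have := rank_leq_col (sample_mx s); lia.
have [all_in | /not_all_ex_not [t /negP t_notin]] :=
  classic (forall t, (value_row t <= sample_mx s)%MS).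
  by exists n, s; apply: row_full_sample_mx.
have [s' rank_lt] := sample_mx_extend t_notin.
by apply: (IH _ s'); have := rank_leq_col (sample_mx s'); lia.
Qed.

Lemma free_family_sample (x : 'I_K -> F) :
  exists n (s : 'I_n -> T) (d : 'I_n -> F),
    forall l, \sum_(a < n) d a * f l (s a) = x l.
Proof.
have [n [s full]] := exists_row_full_sample.
pose xv : 'rV[F]_K := \row_l x l.
have /matrixP xv_sub := mulmxKpV (submx_full xv full).
exists n, s, (fun a => (xv *m pinvmx (sample_mx s)) 0 a) => l.
have := xv_sub 0 l; rewrite [in RHS]mxE => <-; rewrite mxE.
by apply: eq_bigr => a _; rewrite !mxE.
Qed.

End SampledRows.

Lemma sum_delta (R : pzSemiRingType) (K : nat) (k : 'I_K) (G : 'I_K -> R) :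
  \sum_(l < K) (l == k)%:R * G l = G k.
Proof.
rewrite (bigD1 k) //= eqxx mul1r big1 ?addr0 // => l /negbTE ->.
by rewrite mul0r.
Qed.

Lemma sum_delta_in (R : pzSemiRingType) (K : nat) (S : {set 'I_K}) (k : 'I_K)
    (G : 'I_K -> R) :
  \sum_(l in S) (l == k)%:R * G l = (k \in S)%:R * G k.
Proof.
rewrite big_mkcond /= -(sum_delta k (fun l => (l \in S)%:R * G l)).
by apply: eq_bigr => l _; case: (l \in S); rewrite ?mul1r ?mul0r ?mulr0.
Qed.

Section FactorModel.
Variables (F : fieldType) (K : nat) (J : option nat) (Q : 'I_K -> Idx J -> bool).

Definition free_on_regions (A : 'I_K -> Idx J -> F) :=
  forall S : {set 'I_K}, (exists j, RS Q S j) ->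
  forall c : 'I_K -> F, (forall j, RS Q S j -> \sum_(k in S) c k * A k j = 0) ->
  forall k, k \in S -> c k = 0.

Definition supported_by (A : 'I_K -> Idx J -> F) :=
  forall k j, Q k j = false -> A k j = 0.

Lemma supported_by_region A S j l :
  supported_by A -> RS Q S j -> A l j = (l \in S)%:R * A l j.
Proof.
move=> A_supp Sj; case: (boolP (l \in S)) => [_ | l_notin]; first by rewrite mul1r.
by rewrite mul0r A_supp // Sj; apply/negbTE.
Qed.

Lemma free_on_regions_pair A k k' j0 :
  free_on_regions A -> k != k' -> Q k j0 -> Q k' j0 ->
  forall a b, (forall j, a * A k j + b * A k' j = 0) -> a = 0 /\ b = 0.
Proof.
move=> A_free kk' Qk Qk' a b comb0.
pose S := [set l | Q l j0].
pose c l := (l == k)%:R * a + (l == k')%:R * b.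
have c0 : forall l, l \in S -> c l = 0.
  apply: (A_free S); first by exists j0 => l; rewrite inE.
  move=> j _; apply: etrans (comb0 j).
  under eq_bigr do rewrite /c mulrDl -!mulrA.
  by rewrite big_split /= !sum_delta_in !inE Qk Qk' !mul1r.
have ck : c k = a by rewrite /c eqxx (negbTE kk') mul1r mul0r addr0.
have ck' : c k' = b by rewrite /c eq_sym (negbTE kk') eqxx mul0r mul1r add0r.
by rewrite -ck -ck' !c0 ?inE.
Qed.

Lemma loading_coef_eq0_of_not_masks (A A' : 'I_K -> Idx J -> F) (g : 'I_K -> F) k m :
  supported_by A -> supported_by A' -> free_on_regions A' ->
  (forall j, A k j = \sum_(l < K) g l * A' l j) -> ~ masks Q m k -> g m = 0.
Proof.
move=> A_supp A'_supp A'_free A_span.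
move=> /not_all_ex_not [j not_sub].
have [Qm /negP/negbTE Qk] := imply_to_and _ _ not_sub.
pose S := [set l | Q l j].
apply: (A'_free S); [by exists j => l; rewrite inE | move=> j' Sj' | by rewrite inE].
have Qk' : Q k j' = false by rewrite Sj' inE.
apply: etrans (A_supp k j' Qk'); rewrite A_span [LHS]big_mkcond /=.
apply: eq_bigr => l _; rewrite [in RHS](supported_by_region _ A'_supp Sj').
by case: (l \in S); rewrite ?mul1r ?mul0r ?mulr0.
Qed.

End FactorModel.

Lemma loading_in_span (F : fieldType) (K : nat) (T U : Type)
    (Th Th' : 'I_K -> T -> F) (A A' : 'I_K -> U -> F) :
  free_family Th ->
  (forall t u, \sum_(l < K) Th l t * A l u = \sum_(l < K) Th' l t * A' l u) ->
  forall k, exists g : 'I_K -> F, forall u, A k u = \sum_(l < K) g l * A' l u.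
Proof.
move=> Th_free M_eq k.
(* a finite combination of rows of Theta that isolates the k-th factor *)
have [n [s [d d_delta]]] := free_family_sample Th_free (fun l => (l == k)%:R).
exists (fun l => \sum_(a < n) d a * Th' l (s a)) => u.
have sampled (B : 'I_K -> T -> F) (C : 'I_K -> U -> F) :
    \sum_(l < K) (\sum_(a < n) d a * B l (s a)) * C l u =
    \sum_(a < n) d a * \sum_(l < K) B l (s a) * C l u.
  under eq_bigr do rewrite mulr_suml.
  rewrite exchange_big; apply: eq_bigr => a _; rewrite mulr_sumr.
  by apply: eq_bigr => l _; rewrite mulrA.
rewrite -[A k u](sum_delta k (fun l => A l u)).
under eq_bigr => l _ do rewrite -d_delta.
by rewrite !sampled; apply: eq_bigr => a _; rewrite M_eq.
Qed.

(* The perturbation Theta' = Theta E, A' = A E^-T for the elementary matrix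
   E = I - e_k e_k'^T. *)
Section Shear.
Variables (F : fieldType) (K : nat) (k k' : 'I_K).

Definition shear_factor (T : Type) (Th : 'I_K -> T -> F) l t :=
  Th l t - (l == k')%:R * Th k t.

Definition shear_loading (U : Type) (A : 'I_K -> U -> F) l u :=
  A l u + (l == k)%:R * A k' u.

Hypothesis kk' : k != k'.

Lemma shear_factorization (T U : Type) (Th : 'I_K -> T -> F) (A : 'I_K -> U -> F)
    t u :
  \sum_(l < K) shear_factor Th l t * shear_loading A l u =
  \sum_(l < K) Th l t * A l u.
Proof.
rewrite (eq_bigr (fun l => Th l t * A l u + (l == k)%:R * (Th l t * A k' u)
                           - (l == k')%:R * (Th k t * shear_loading A l u))); last first.
  by move=> l _; rewrite /shear_factor /shear_loading; ring.
rewrite sumrB big_split /= !sum_delta /shear_loading eq_sym (negbTE kk').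
by rewrite mul0r addr0 addrK.
Qed.

Lemma free_family_shear (T : Type) (Th : 'I_K -> T -> F) :
  free_family Th -> free_family (shear_factor Th).
Proof.
move=> Th_free c c0.
pose c2 l := c l - (l == k)%:R * c k'.
have c2_0 : forall l, c2 l = 0.
  apply: Th_free => t; apply: etrans (c0 t).
  rewrite /c2 /shear_factor.
  under eq_bigr do rewrite mulrBl -mulrA.
  under [RHS]eq_bigr do rewrite mulrBr mulrCA.
  by rewrite !sumrB !sum_delta.
have ck' : c k' = 0 by have := c2_0 k'; rewrite /c2 eq_sym (negbTE kk') mul0r subr0.
by move=> l; have := c2_0 l; rewrite /c2 ck' mulr0 subr0.
Qed.

Variables (J : option nat) (Q : 'I_K -> Idx J -> bool).

Lemma supported_by_shear (A : 'I_K -> Idx J -> F) :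
  masks Q k' k -> supported_by Q A -> supported_by Q (shear_loading A).
Proof.
move=> mask A_supp l j Qlj; rewrite /shear_loading A_supp // add0r.
have [lk | _] := eqVneq l k; last by rewrite mul0r.
rewrite A_supp ?mulr0 //; apply/negbTE/negP => /mask.
by rewrite /supp -lk Qlj.
Qed.

Lemma free_on_regions_shear (A : 'I_K -> Idx J -> F) :
  supported_by Q A -> free_on_regions Q A -> free_on_regions Q (shear_loading A).
Proof.
move=> A_supp A_free S S_ne c c0.
pose b := (k \in S)%:R * c k.
pose c2 l := c l + (l == k')%:R * b.
have c2_0 : forall l, l \in S -> c2 l = 0.
  apply: (A_free S S_ne) => j Sj; apply: etrans (c0 j Sj).
  rewrite /c2 /shear_loading.
  under eq_bigr do rewrite mulrDl -mulrA.
  under [RHS]eq_bigr do rewrite mulrDr mulrCA.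
  rewrite !big_split /= !sum_delta_in; congr (_ + _).
  by rewrite [in RHS](supported_by_region _ A_supp Sj) /b; ring.
have b0 : b = 0.
  rewrite /b; have [kS | _] := boolP (k \in S); last by rewrite mul0r.
  by have := c2_0 k kS; rewrite /c2 (negbTE kk') mul0r addr0 => ->; rewrite mulr0.
by move=> l lS; have := c2_0 l lS; rewrite /c2 b0 mulr0 addr0.
Qed.

End Shear.

Section ShearBounds.
Variables (R : realFieldType) (K : nat) (k k' : 'I_K) (C : R).

Lemma norm_shear_factor_lt (T : Type) (Th : 'I_K -> T -> R) :
  (forall l t, `|Th l t| < C) -> forall l t, `|shear_factor k k' Th l t| < C + C.
Proof.
move=> Th_bound l t; apply: le_lt_trans (ler_normB _ _) _.
have := Th_bound l t; have := Th_bound k t; have := normr_ge0 (Th k t).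
by case: (l == k'); rewrite ?mul1r ?mul0r ?normr0; lra.
Qed.

Lemma norm_shear_loading_lt (U : Type) (A : 'I_K -> U -> R) :
  (forall l u, `|A l u| < C) -> forall l u, `|shear_loading k k' A l u| < C + C.
Proof.
move=> A_bound l u; apply: le_lt_trans (ler_normD _ _) _.
have := A_bound l u; have := A_bound k' u; have := normr_ge0 (A k' u).
by case: (l == k); rewrite ?mul1r ?mul0r ?normr0; lra.
Qed.

End ShearBounds.

Lemma model_assumptions_shear (R : realType) (K : nat) (N J : option nat)
    (Q : 'I_K -> Idx J -> bool) (Th : 'I_K -> Idx N -> R) (A : 'I_K -> Idx J -> R) k k' :
  k != k' -> masks Q k' k -> model_assumptions Q Th A ->
  model_assumptions Q (shear_factor k k' Th) (shear_loading k k' A).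
Proof.
move=> kk' mask [Th_free [A_free [A_supp [C [C_gt0 [Th_bound A_bound]]]]]].
split; first exact: free_family_shear.
split; first exact: free_on_regions_shear.
split; first exact: supported_by_shear.
exists (C + C); split; first by rewrite addr_gt0.
by split; [apply: norm_shear_factor_lt | apply: norm_shear_loading_lt].
Qed.

Lemma identifiable_of_unmasked (R : realType) (K : nat) (N J : option nat)
    (Q : 'I_K -> Idx J -> bool) (Th : 'I_K -> Idx N -> R) (A : 'I_K -> Idx J -> R) k :
  model_assumptions Q Th A -> ~ (exists k', k' != k /\ masks Q k' k) ->
  identifiable Q Th A k.
Proof.
move=> [Th_free [_ [A_supp _]]] unmasked Th' A' M_eq [_ [A'_free [A'_supp _]]].
have [g A_span] := loading_in_span Th_free M_eq k.
have g_off m : m != k -> g m = 0.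
  move=> mk; apply: loading_coef_eq0_of_not_masks A_supp A'_supp A'_free A_span _.
  by move=> mask; apply: unmasked; exists m.
exists 1, (- g k); split; first by left; apply: oner_neq0.
move=> j; rewrite A_span (bigD1 k) //= big1 ?addr0 => [|l lk].
  by rewrite mul1r mulNr addrN.
by rewrite g_off ?mul0r.
Qed.

Lemma not_identifiable_of_masked (R : realType) (K : nat) (N J : option nat)
    (Q : 'I_K -> Idx J -> bool) (Th : 'I_K -> Idx N -> R) (A : 'I_K -> Idx J -> R) k k' :
  model_assumptions Q Th A -> (exists j, supp Q k' j) -> k' != k -> masks Q k' k ->
  ~ identifiable Q Th A k.
Proof.
move=> MA [j0 Qk'] k'k mask ident.
have kk' : k != k' by rewrite eq_sym.
have M_eq i j := esym (shear_factorization kk' Th A i j).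
have [a [b [ab_nz comb0]]] := ident _ _ M_eq (model_assumptions_shear kk' mask MA).
have [_ [A_free _]] := MA.
have [ab0 b0] : a + b = 0 /\ b = 0.
  apply: (free_on_regions_pair A_free kk' (mask j0 Qk') Qk') => j.
  by apply: etrans (comb0 j); rewrite /shear_loading eqxx mul1r; ring.
by move: ab_nz; rewrite b0 addr0 in ab0; rewrite ab0 b0 eqxx; case.
Qed.

Theorem theorem2 (R : realType) (K : nat) (N J : option nat)
    (HK : (0 < K)%N) (HN : pos_or_inf N) (HJ : pos_or_inf J)
    (Th : 'I_K -> Idx N -> R) (A : 'I_K -> Idx J -> R)
    (Q : 'I_K -> Idx J -> bool) :
  model_assumptions Q Th A ->
  (forall k : 'I_K, exists j : Idx J, supp Q k j) ->
  forall k : 'I_K,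
    identifiable Q Th A k <-> ~ (exists k' : 'I_K, k' != k /\ masks Q k' k).
Proof.
move=> MA supp_nonempty k; split; last exact: identifiable_of_unmasked.
move=> ident [k' [k'k mask]].
exact: not_identifiable_of_masked MA (supp_nonempty k') k'k mask ident.
Qed.
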